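(* Let $X$ be a non-empty finite set and $\mathcal{P}$ a partition of $X$. Let $s$ be the number of distinct sizes of blocks of $\mathcal{P}$, and let $r$ be the number of sizes $m$ such that $\mathcal{P}$ has at least two blocks of size $m$. Then $\operatorname{rank}(T(X,\mathcal{P}):\Sigma(X,\mathcal{P}))=\binom{s}{2}+r$.
   Context: $T(X,\mathcal{P})$ is the semigroup (under composition) of maps $f:X\to X$ such that for every block $P$ of $\mathcal{P}$ there is a block $Q$ with $Pf\subseteq Q$; $\Sigma(X,\mathcal{P})$ is the subsemigroup of those $f\in T(X,\mathcal{P})$ whose image intersects every block of $\mathcal{P}$. For a subsemigroup $U$ of a semigroup $V$, the relative rank $\operatorname{rank}(V:U)$ is the least cardinality of a subset $W\subseteq V$ such that $U\cup W$ generates $V$ as a semigroup. *)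

From mathcomp Require Import all_boot.
Set Implicit Arguments. Unset Strict Implicit. Unset Printing Implicit Defensive.

Section Defs.
Variable X : finType.

Definition TXP (P : {set {set X}}) : {set {ffun X -> X}} :=
  [set f : {ffun X -> X} | [forall B in P, exists C in P, f @: B \subset C]].

Definition SigmaXP (P : {set {set X}}) : {set {ffun X -> X}} :=
  [set f in TXP P | [forall B in P, exists x, f x \in B]].

(* composition of a sequence of maps (applied left to right: x(a1 a2 ... an)) *)
Definition seq_comp (s : seq {ffun X -> X}) : {ffun X -> X} :=
  foldr (fun (g acc : {ffun X -> X}) => [ffun x => acc (g x)] : {ffun X -> X}) ([ffun x => x] : {ffun X -> X}) s.

Definition in_sgp_gen (A : {set {ffun X -> X}}) (f : {ffun X -> X}) : Prop :=
  exists s : seq {ffun X -> X}, [/\ s != [::], all (fun g => g \in A) s & f = seq_comp s].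

Definition generates_with (V U W : {set {ffun X -> X}}) : Prop :=
  forall f, f \in V <-> in_sgp_gen (U :|: W) f.

Definition relative_rank_eq (V U : {set {ffun X -> X}}) (k : nat) : Prop :=
  (exists W : {set {ffun X -> X}}, [/\ W \subset V, generates_with V U W & #|W| = k]) /\
  (forall W : {set {ffun X -> X}}, W \subset V -> generates_with V U W -> k <= #|W|).

Definition block_sizes (P : {set {set X}}) : seq nat :=
  undup [seq #|B| | B : {set X} <- enum P].

Definition repeated_sizes (P : {set {set X}}) : nat :=
  size [seq m <- block_sizes P | 1 < #|[set B in P | #|B| == m]| ].
End Defs.

From mathcomp Require Import all_boot all_fingroup zify.
Set Implicit Arguments. Unset Strict Implicit. Unset Printing Implicit Defensive.

(* Every f in T(X,P) induces a map on the blocks, and f is in Sigma iff this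
   block map is onto.  Call f a single merge of type {|B|, |B'|} when f is
   injective on every block and its block map identifies exactly one pair of
   distinct blocks B, B'.  No element of Sigma is a single merge, and if a
   product is a single merge then so is one of its factors, with the same type;
   hence a relative generating set contains a single merge of each type, and
   there are C(s,2) + r types.  Conversely one map per type suffices: the map
   pushing a block B0 injectively into a block B0' of the prescribed sizes.  If
   f misses some block, it merges two blocks; a Hall-type counting argument
   finds a permutation of the blocks leaving room for the images of f, which
   gives f = sg * push * g with sg in Sigma and g hitting strictly more blocks
   than f, so induction on the number of missed blocks concludes. *)

Lemma card_le_of_witnesses (T U : finType) (S : {set T}) (W : {set U})
    (R : T -> U -> Prop) :
  (forall a, a \in S -> exists2 w, w \in W & R a w) ->
  (forall a b w, R a w -> R b w -> a = b) -> #|S| <= #|W|.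
Proof.
move=> witness R_uniq; have [n] := ubnP #|S|.
elim: n S W witness => // n IH S W witness ltSn.
have [->|[a aS]] := set_0Vmem S; first by rewrite cards0.
have [w wW Raw] := witness a aS.
rewrite (cardsD1 a S) (cardsD1 w W) aS wW !add1n ltnS.
apply: IH; last by move: ltSn; rewrite (cardsD1 a S) aS.
move=> b /setD1P[ba bS]; have [w' w'W Rbw'] := witness b bS.
exists w' => //; rewrite !inE w'W andbT.
by apply: contraNneq ba => w'w; apply/eqP/(R_uniq _ _ w' Rbw'); rewrite w'w.
Qed.

Lemma threshold_injection (T : finType) (d s : T -> nat) (A B : {set T}) :
  (forall t, #|[set a in A | t <= d a]| <= #|[set b in B | t <= s b]|) ->
  exists pi : T -> T, {in A &, injective pi} /\
    {in A, forall a, pi a \in B /\ d a <= s (pi a)}.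
Proof.
have [n] := ubnP #|A|; elim: n A B => // n IH A B ltAn dominated.
have [->|[a0 a0A]] := set_0Vmem A; first by exists id; split=> // a; rewrite inE.
(* Serve a largest demand first, by any large enough element of B. *)
have [am amA' am_max] := @arg_maxnP T a0 (mem A) d a0A.
have amA : am \in A := amA'.
have [bm] : exists bm, bm \in [set b in B | d am <= s b].
  apply/set0Pn; rewrite -card_gt0; apply: leq_trans (dominated (d am)).
  by rewrite card_gt0; apply/set0Pn; exists am; rewrite inE amA leqnn.
rewrite inE => /andP[bmB am_bm].
have ltAn' : #|A :\ am| < n by move: ltAn; rewrite (cardsD1 am A) amA.
have dominated' t :
    #|[set a in A :\ am | t <= d a]| <= #|[set b in B :\ bm | t <= s b]|.
  have [t_am|am_t] := leqP t (d am); last first.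
    suff -> : [set a in A :\ am | t <= d a] = set0 by rewrite cards0.
    apply/setP => a; rewrite !inE; apply/negbTE; apply/negP => /andP[/andP[_ aA] ta].
    by have := leq_trans am_t (leq_trans ta (am_max a aA)); rewrite ltnn.
  have := dominated t.
  rewrite (cardsD1 am [set a in A | _]) (cardsD1 bm [set b in B | _]) !inE.
  rewrite amA bmB t_am (leq_trans t_am am_bm) !add1n ltnS.
  congr (_ <= _); apply: eq_card => x; rewrite !inE; by case: (x == _).
have [pi [pi_inj pi_dom]] := IH _ _ ltAn' dominated'.
exists (fun a => if a == am then bm else pi a); split.
  move=> a a' aA a'A /=.
  have pi_out c : c \in A -> c != am -> pi c != bm.
    by move=> cA cam; have [] := pi_dom c; rewrite ?inE ?cam // => /andP[].
  have [->|a_am] := eqVneq a am; have [->|a'_am] := eqVneq a' am => //.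
  - by move/esym/eqP; rewrite (negbTE (pi_out a' a'A a'_am)).
  - by move/eqP; rewrite (negbTE (pi_out a aA a_am)).
  by apply: pi_inj; rewrite !inE ?a_am ?a'_am.
move=> a aA /=; have [->|a_am] := eqVneq a am; first by [].
by have [] := pi_dom a; rewrite ?inE ?a_am // => /andP[_ ->].
Qed.

Lemma inj_selfmap_onto (T : finType) (S : {set T}) (pi : T -> T) :
  {in S, forall a, pi a \in S} -> {in S &, injective pi} ->
  {in S, forall b, exists2 a, a \in S & b = pi a}.
Proof.
move=> piS pi_inj b bS.
have pi_onto : pi @: S = S.
  apply/eqP; rewrite eqEcard card_in_imset // leqnn andbT.
  by apply/subsetP => _ /imsetP[a aS ->]; apply: piS.
by move: bS; rewrite -{1}pi_onto => /imsetP[a aS ->]; exists a.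
Qed.

Lemma inj_or_collision (T : finType) (U : eqType) (F : T -> U) (S : {set T}) :
  {in S &, injective F} \/ exists a b, [/\ a \in S, b \in S, a != b & F a = F b].
Proof.
have [/dinjectiveP|/dinjectivePn[a aS [b /andP[ba bS] Fab]]] := boolP (dinjectiveb F S).
  by left.
by right; exists a, b; rewrite eq_sym.
Qed.

Lemma card_ord_mem_seq n (s : seq nat) : uniq s -> all (fun m => m < n.+1) s ->
  #|[set z : 'I_n.+1 | nat_of_ord z \in s]| = size s.
Proof.
elim: s => [|a s IH] /=; first by move=> _ _; apply: eq_card0 => z; rewrite inE.
case/andP => a_s s_uniq /andP[a_lt s_lt].
have -> : [set z : 'I_n.+1 | nat_of_ord z \in a :: s] =
    inord a |: [set z | nat_of_ord z \in s].
  apply/setP => z; rewrite !inE; congr (_ || _).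
  by apply/eqP/eqP => [za|->]; rewrite ?inordK //; apply: ord_inj; rewrite inordK.
by rewrite cardsU1 IH // inE inordK // a_s.
Qed.

Lemma set2_sorted_inj n (a b c d : 'I_n) :
  a <= b -> c <= d -> [set a; b] = [set c; d] -> a = c /\ b = d.
Proof.
move=> le_ab le_cd e.
have [ha|ha] : a = c \/ a = d by apply/set2P; rewrite -e set21.
all: have [hb|hb] : b = c \/ b = d by apply/set2P; rewrite -e set22.
all: have [hc|hc] : c = a \/ c = b by apply/set2P; rewrite e set21.
all: have [hd|hd] : d = a \/ d = b by apply/set2P; rewrite e set22.
all: by subst; split=> //; apply: ord_inj; lia.
Qed.

Section Composition.
Variable X : finType.
Implicit Types (f g : {ffun X -> X}) (A : {set {ffun X -> X}}) (s : seq {ffun X -> X}).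

Definition fcomp f g : {ffun X -> X} := [ffun x => g (f x)].

Lemma fcompE f g x : fcomp f g x = g (f x).
Proof. by rewrite ffunE. Qed.

Lemma seq_comp_cons g s : seq_comp (g :: s) = fcomp g (seq_comp s).
Proof. by []. Qed.

Lemma seq_comp1 g : seq_comp [:: g] = g.
Proof. by apply/ffunP => x; rewrite !ffunE. Qed.

Lemma seq_comp_cat s1 s2 : seq_comp (s1 ++ s2) = fcomp (seq_comp s1) (seq_comp s2).
Proof.
elim: s1 => [|g s IH] /=; apply/ffunP => x; first by rewrite !ffunE.
by rewrite IH !ffunE.
Qed.

Lemma in_sgp_gen1 A g : g \in A -> in_sgp_gen A g.
Proof. by move=> gA; exists [:: g]; rewrite seq_comp1 /= gA. Qed.

Lemma in_sgp_gen_comp A f g :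
  in_sgp_gen A f -> in_sgp_gen A g -> in_sgp_gen A (fcomp f g).
Proof.
move=> [s1 [s1_nil s1A ->]] [s2 [_ s2A ->]]; exists (s1 ++ s2); split.
- by case: s1 s1_nil {s1A}.
- by rewrite all_cat s1A s2A.
- by rewrite seq_comp_cat.
Qed.

End Composition.

(** * Block maps *)

Section Partition.
Variables (X : finType) (P : {set {set X}}) (x0 : X).
Hypothesis partP : partition P [set: X].
Implicit Types (x y : X) (B C D M : {set X}) (f g h : {ffun X -> X}).
Implicit Types (W : {set {ffun X -> X}}) (s : seq {ffun X -> X}).

Local Notation blk := (pblock P).

Lemma trivIset_P : trivIset P.
Proof. by case/and3P: partP. Qed.

Lemma blk_mem x : blk x \in P.
Proof. by apply: pblock_mem; case/and3P: partP => /eqP ->. Qed.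

Lemma mem_blk x : x \in blk x.
Proof. by rewrite mem_pblock; case/and3P: partP => /eqP ->. Qed.

Lemma blk_eq C x : C \in P -> x \in C -> blk x = C.
Proof. exact: def_pblock trivIset_P. Qed.

Lemma mem_blockE C x : C \in P -> (x \in C) = (blk x == C).
Proof. by move=> CP; apply/idP/eqP => [|<-]; [apply: blk_eq | apply: mem_blk]. Qed.

Definition rep C := odflt x0 [pick x in C].

Lemma rep_mem C : C \in P -> rep C \in C.
Proof.
move=> CP; rewrite /rep; case: pickP => [//|C0].
have C_0 : C = set0 by apply/setP => y; rewrite inE C0.
by case/and3P: partP => _ _; rewrite -C_0 CP.
Qed.

Lemma blk_rep C : C \in P -> blk (rep C) = C.
Proof. by move=> CP; apply: blk_eq CP (rep_mem CP). Qed.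

Lemma TXP_blkP f :
  reflect (forall x y, blk x = blk y -> blk (f x) = blk (f y)) (f \in TXP P).
Proof.
rewrite inE; apply: (iffP forall_inP) => [fT x y xy | f_blk B BP].
  have [C /andP[CP fC]] := existsP (fT _ (blk_mem x)).
  have fxC : f x \in C by apply/(subsetP fC)/imset_f/mem_blk.
  have fyC : f y \in C by apply/(subsetP fC)/imset_f; rewrite xy mem_blk.
  by rewrite (blk_eq CP fxC) (blk_eq CP fyC).
apply/existsP; exists (blk (f (rep B))); rewrite blk_mem /=.
apply/subsetP => _ /imsetP[y yB ->]; rewrite mem_blockE ?blk_mem //.
by apply/eqP/f_blk; rewrite (blk_eq BP yB) blk_rep.
Qed.

Lemma SigmaXP_P f : reflect (f \in TXP P /\ forall B, B \in P -> exists x, f x \in B)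
  (f \in SigmaXP P).
Proof.
rewrite [f \in SigmaXP P]inE; apply: (iffP andP) => -[fT f_onto]; split=> //.
  by move=> B /(forall_inP f_onto)/existsP.
by apply/forall_inP => B /f_onto[x fxB]; apply/existsP; exists x.
Qed.

Lemma SigmaXP_TXP f : f \in SigmaXP P -> f \in TXP P.
Proof. by case/SigmaXP_P. Qed.

Lemma id_TXP : [ffun x => x] \in TXP P.
Proof. by apply/TXP_blkP => x y; rewrite !ffunE. Qed.

Lemma fcomp_TXP f g : f \in TXP P -> g \in TXP P -> fcomp f g \in TXP P.
Proof. by move=> /TXP_blkP fT /TXP_blkP gT; apply/TXP_blkP => x y /fT/gT; rewrite !fcompE. Qed.

Lemma seq_comp_TXP s : all (fun g => g \in TXP P) s -> seq_comp s \in TXP P.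
Proof. by elim: s => [_|g s IH /andP[gT /IH]]; [apply: id_TXP | apply: fcomp_TXP]. Qed.

Lemma in_sgp_gen_TXP W f :
  W \subset TXP P -> in_sgp_gen (SigmaXP P :|: W) f -> f \in TXP P.
Proof.
move=> WT [s [_ sW ->]]; apply: seq_comp_TXP; apply/allP => g /(allP sW).
by case/setUP => [/SigmaXP_TXP|/(subsetP WT)].
Qed.

Definition bmap f C := blk (f (rep C)).

Lemma bmap_mem f C : bmap f C \in P.
Proof. exact: blk_mem. Qed.

Lemma bmap_blk f x : f \in TXP P -> bmap f (blk x) = blk (f x).
Proof. by move=> /TXP_blkP fT; apply: fT; rewrite blk_rep ?blk_mem. Qed.

Lemma bmapE f C x : f \in TXP P -> C \in P -> x \in C -> bmap f C = blk (f x).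
Proof. by move=> fT CP xC; rewrite -(blk_eq CP xC) bmap_blk. Qed.

Lemma imset_sub_bmap f C : f \in TXP P -> C \in P -> f @: C \subset bmap f C.
Proof.
by move=> fT CP; apply/subsetP => _ /imsetP[y yC ->]; rewrite (bmapE fT CP yC) mem_blk.
Qed.

Lemma card_imset_bmap f C : f \in TXP P -> C \in P -> #|f @: C| <= #|bmap f C|.
Proof. by move=> fT CP; apply/subset_leq_card/imset_sub_bmap. Qed.

Lemma bmap_comp f g C : g \in TXP P -> bmap (fcomp f g) C = bmap g (bmap f C).
Proof. by move=> gT; rewrite {1}/bmap fcompE -bmap_blk. Qed.

Definition hit f := [set blk (f x) | x : X].

Lemma hit_sub f : hit f \subset P.
Proof. by apply/subsetP => _ /imsetP[x _ ->]; apply: blk_mem. Qed.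

(** * Factoring a map that misses a block *)

Definition push (B0 B0' : {set X}) : {ffun X -> X} :=
  [ffun y => if y \in B0 then nth y (enum B0') (index y (enum B0)) else y].

Lemma push_out (B0 B0' : {set X}) y : y \notin B0 -> push B0 B0' y = y.
Proof. by rewrite ffunE => /negbTE ->. Qed.

Lemma push_in (B0 B0' : {set X}) y : #|B0| <= #|B0'| -> y \in B0 -> push B0 B0' y \in B0'.
Proof.
move=> le_B0 yB; rewrite ffunE yB -mem_enum; apply: mem_nth; rewrite -cardE.
by apply: leq_trans le_B0; rewrite cardE index_mem mem_enum.
Qed.

Lemma push_inj (B0 B0' : {set X}) : #|B0| <= #|B0'| -> {in B0 &, injective (push B0 B0')}.
Proof.
move=> le_B0 y y' yB y'B; rewrite !ffunE yB y'B.
have idx z : z \in B0 -> index z (enum B0) < size (enum B0').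
  by move=> zB; rewrite -cardE (leq_trans _ le_B0) // cardE index_mem mem_enum.
move/(congr1 (index^~ (enum B0'))); rewrite !index_uniq ?enum_uniq ?idx // => e.
by rewrite -(nth_index y (_ : y \in enum B0)) ?mem_enum // e nth_index ?mem_enum.
Qed.

(* [enc] spreads every block [C] injectively over [pi C], remembering just enough
   of [f] for [dec] to recover it after [push B0 B0'] has moved the images of
   both [Bs] and [Bt] into [B0'].  The block [B0] is thereby emptied, and [dec]
   is free to send it onto the missed block [M]. *)
Section Factorization.
Variables (f : {ffun X -> X}) (pi : {set X} -> {set X}) (Bs Bt B0 B0' M : {set X}).
Hypotheses (fT : f \in TXP P) (piP : {in P, forall C, pi C \in P})
  (pi_inj : {in P &, injective pi}) (BsP : Bs \in P) (BtP : Bt \in P)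
  (Bs_Bt : Bs != Bt) (f_merges : bmap f Bs = bmap f Bt)
  (pi_Bs : pi Bs = B0) (pi_Bt : pi Bt = B0')
  (room : forall C, C \in P -> C != Bs -> C != Bt -> #|f @: C| <= #|pi C|)
  (room_Bs : #|f @: Bs| <= #|B0|) (room_pair : #|f @: (Bs :|: Bt)| <= #|B0'|)
  (MP : M \in P) (f_misses : forall x, blk (f x) != M).

Let pi_eq : {in P &, forall C C', (pi C == pi C') = (C == C')} := inj_in_eq pi_inj.
Let in_pair x := (blk x == Bs) || (blk x == Bt).
Let pair_img := enum (f @: Bs) ++ enum (f @: Bt :\: f @: Bs).
Let img x := if in_pair x then pair_img else enum (f @: blk x).
Let target x := if in_pair x then B0' else pi (blk x).
Let code x := index (f x) (img x).

Lemma mem_img x : f x \in img x.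
Proof.
rewrite /img /in_pair; case: ifP => [/orP pair_x|_]; last first.
  by rewrite mem_enum imset_f ?mem_blk.
have fx_img C : blk x = C -> f x \in f @: C by move=> <-; rewrite imset_f ?mem_blk.
rewrite mem_cat !mem_enum !inE.
by case: pair_x => /eqP/fx_img ->; rewrite ?andbT ?orbN.
Qed.

Lemma size_img x : size (img x) <= #|target x|.
Proof.
rewrite /img /target; case: ifP => px; last first.
  move/negbT: px; rewrite /in_pair negb_or => /andP[nBs nBt].
  by rewrite -cardE room ?blk_mem.
apply: leq_trans room_pair; rewrite size_cat -!cardE imsetU cardsU cardsD.
by rewrite [f @: Bt :&: _]setIC addnBA ?subset_leq_card ?subsetIr.
Qed.

Lemma code_lt x : code x < #|target x|.
Proof. by apply: leq_trans (size_img x); rewrite index_mem mem_img. Qed.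

Lemma code_Bs x : blk x = Bs -> code x < #|B0|.
Proof.
move=> xBs; have fx : f x \in f @: Bs by rewrite -xBs imset_f ?mem_blk.
rewrite /code /img /in_pair xBs eqxx /= /pair_img index_cat mem_enum fx.
by apply: leq_trans room_Bs; rewrite cardE index_mem mem_enum.
Qed.

Lemma target_mem x : target x \in P.
Proof. by rewrite /target; case: ifP; rewrite -?pi_Bt piP ?blk_mem. Qed.

Lemma target_notBs x : blk x != Bs -> target x = pi (blk x).
Proof. by rewrite /target /in_pair => /negbTE ->; case: eqP => // ->. Qed.

Lemma target_neq_B0 x : target x != B0.
Proof.
rewrite -pi_Bs /target; case: ifP => px; first by rewrite -pi_Bt pi_eq // eq_sym.
by rewrite pi_eq ?blk_mem //; apply: contraFneq px; rewrite /in_pair => ->; rewrite eqxx.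
Qed.

Lemma target_inj x y :
  target x = target y -> in_pair x = in_pair y /\ (~~ in_pair x -> blk x = blk y).
Proof.
have out_pair z : ~~ in_pair z -> pi (blk z) != B0'.
  by rewrite /in_pair negb_or -pi_Bt pi_eq ?blk_mem // => /andP[].
rewrite /target; case: (boolP (in_pair x)) => px; case: (boolP (in_pair y)) => py //.
- by move=> e; have := out_pair y py; rewrite -e eqxx.
- by move=> e; have := out_pair x px; rewrite e eqxx.
by move=> /pi_inj e; split=> // _; apply: e; apply: blk_mem.
Qed.

Lemma code_lt_pi x : code x < #|pi (blk x)|.
Proof.
have [xBs|nBs] := eqVneq (blk x) Bs; first by rewrite xBs pi_Bs code_Bs.
by rewrite -target_notBs ?code_lt.
Qed.

Definition enc : {ffun X -> X} := [ffun x => nth x (enum (pi (blk x))) (code x)].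

Lemma enc_mem x : enc x \in pi (blk x).
Proof. by rewrite ffunE -mem_enum mem_nth // -cardE code_lt_pi. Qed.

Lemma enc_Sigma : enc \in SigmaXP P.
Proof.
apply/SigmaXP_P; split.
  apply/TXP_blkP => x y xy.
  by rewrite (blk_eq (piP (blk_mem x)) (enc_mem x)) (blk_eq (piP (blk_mem y)) (enc_mem y)) xy.
move=> B BP; have [C CP ->] := inj_selfmap_onto piP pi_inj BP.
by exists (rep C); have := enc_mem (rep C); rewrite blk_rep.
Qed.

Let enc_push := fcomp enc (push B0 B0').

Lemma enc_pushE x : enc_push x = nth x (enum (target x)) (code x).
Proof.
rewrite /enc_push fcompE ffunE; have [xBs|nBs] := eqVneq (blk x) Bs.
  have encB0 : enc x \in B0 by rewrite -pi_Bs -xBs enc_mem.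
  have encx : enc x = nth x (enum B0) (code x) by rewrite ffunE xBs pi_Bs.
  rewrite encB0 /target /in_pair xBs eqxx /= {2}encx index_uniq ?enum_uniq -?cardE //.
    apply: set_nth_default; rewrite -cardE (leq_trans (code_lt x)) //.
    by rewrite /target /in_pair xBs eqxx.
  by rewrite -pi_Bs -xBs code_lt_pi.
have -> : (enc x \in B0) = false.
  apply/negbTE; rewrite -pi_Bs (mem_blockE _ (piP BsP)) (blk_eq (piP (blk_mem x)) (enc_mem x)).
  by rewrite pi_eq ?blk_mem.
by rewrite target_notBs // ffunE.
Qed.

Lemma enc_push_mem x : enc_push x \in target x.
Proof. by rewrite enc_pushE -mem_enum mem_nth // -cardE code_lt. Qed.

Lemma blk_enc_push x : blk (enc_push x) = target x.
Proof. exact: blk_eq (target_mem x) (enc_push_mem x). Qed.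

Lemma enc_push_blk x y : blk (enc_push x) = blk (enc_push y) -> blk (f x) = blk (f y).
Proof.
rewrite !blk_enc_push => /target_inj[pxy xy].
case: (boolP (in_pair x)) => px; last by rewrite -!bmap_blk // xy.
have pair_blk z : in_pair z -> blk (f z) = bmap f Bs.
  by rewrite -bmap_blk // /in_pair => /orP[]/eqP->.
by rewrite !pair_blk -?pxy.
Qed.

(* Position and block of [enc_push x] recover [code x] and [img x], hence [f x]. *)
Lemma enc_push_f x y : enc_push x = enc_push y -> f x = f y.
Proof.
move=> e; have txy : target x = target y by rewrite -blk_enc_push e blk_enc_push.
have [pxy xy] := target_inj txy.
have img_xy : img x = img y.
  by rewrite /img pxy; case: ifP => // py; rewrite xy ?pxy ?py.
have ltx := code_lt x; have lty : code y < #|target x| by rewrite txy code_lt.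
move: e; rewrite !enc_pushE -txy (set_nth_default x y) -?cardE //.
move/eqP; rewrite nth_uniq ?enum_uniq -?cardE // /code img_xy => /eqP code_xy.
have fx_img : f x \in img y by rewrite -img_xy mem_img.
by rewrite -(nth_index x fx_img) code_xy nth_index ?mem_img.
Qed.

Definition dec : {ffun X -> X} := [ffun z =>
  if [pick x | enc_push x == z] is Some x then f x else
  if [pick x | blk (enc_push x) == blk z] is Some x then f x else rep M].

Lemma decP z : (exists x, blk (enc_push x) = blk z /\ dec z = f x) \/
   ((forall x, blk (enc_push x) != blk z) /\ dec z = rep M).
Proof.
rewrite /dec ffunE; case: pickP => [x /eqP e|_]; first by left; exists x; rewrite e.
case: pickP => [x /eqP e|none]; first by left; exists x.
by right; split=> // x; rewrite none.
Qed.

Lemma dec_TXP : dec \in TXP P.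
Proof.
apply/TXP_blkP => z z' zz'.
case: (decP z) => [[x [xz ->]]|[nx ->]]; case: (decP z') => [[y [yz ->]]|[ny ->]] //.
- by apply: enc_push_blk; rewrite xz yz.
- by have := ny x; rewrite xz zz' eqxx.
- by have := nx y; rewrite yz zz' eqxx.
Qed.

Lemma dec_enc_push x : dec (enc_push x) = f x.
Proof.
rewrite /dec ffunE; case: pickP => [y /eqP/enc_push_f//|none].
by have := none x; rewrite eqxx.
Qed.

Lemma hit_dec : #|hit f| < #|hit dec|.
Proof.
apply/proper_card/properP; split.
  apply/subsetP => _ /imsetP[x _ ->]; apply/imsetP.
  by exists (enc_push x); rewrite ?dec_enc_push.
exists M; last by apply/imsetP => -[x _ e]; have := f_misses x; rewrite e eqxx.
apply/imsetP; exists (rep B0) => //.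
have B0P : B0 \in P by rewrite -pi_Bs piP.
case: (decP (rep B0)) => [[x [xB0 _]]|[_ ->]]; last by rewrite blk_rep.
by have := target_neq_B0 x; rewrite -blk_enc_push xB0 blk_rep ?eqxx.
Qed.

Lemma factor_through_push : exists sg g, [/\ sg \in SigmaXP P, g \in TXP P,
  #|hit f| < #|hit g| & f = fcomp (fcomp sg (push B0 B0')) g].
Proof.
exists enc, dec; split; [exact: enc_Sigma | exact: dec_TXP | exact: hit_dec |].
by apply/ffunP => x; rewrite fcompE dec_enc_push.
Qed.

End Factorization.

Section Threshold.
Variables (f : {ffun X -> X}) (B1 B2 Bm : {set X}).
Hypotheses (fT : f \in TXP P) (B1P : B1 \in P) (B2P : B2 \in P) (B1_B2 : B1 != B2)
  (f_merges : bmap f B1 = bmap f B2) (img_le : #|f @: B2| <= #|f @: B1|)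
  (Bm_max : forall C C', C \in P -> C' \in P -> C != C' -> bmap f C = bmap f C' ->
     #|C| <= #|Bm|)
  (Bm12 : Bm = B1 \/ Bm = B2).

(* The room needed in the image block of each block when [B1] must receive
   the images of both [B1] and [B2]. *)
Definition demand C := if C == B1 then #|f @: (B1 :|: B2)| else #|f @: C|.

Local Notation demanding t := [set C in P | t <= demand C].
Local Notation large t := [set C in P | t <= #|C|].

Lemma demand_le C : C != B1 -> demand C <= #|C|.
Proof. by rewrite /demand => /negbTE->; apply: leq_imset_card. Qed.

Lemma demand_B1 : #|bmap f B1| >= demand B1.
Proof.
rewrite /demand eqxx; apply: subset_leq_card; apply/subsetP => _ /imsetP[y + ->].
by rewrite inE => /orP[] yB; [|rewrite f_merges]; rewrite (bmapE fT _ yB) ?mem_blk.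
Qed.

Lemma large_undemanded t : #|B1| < t <= demand B1 ->
  exists2 C0, C0 \in large t & C0 \notin demanding t.
Proof.
case/andP => ltB1 tB1; have [tB2|ltB2] := leqP t #|B2|.
  exists B2; first by rewrite inE B2P.
  rewrite inE B2P /= /demand eq_sym (negbTE B1_B2) -ltnNge.
  exact: leq_ltn_trans img_le (leq_ltn_trans (leq_imset_card _ _) ltB1).
have ltBm : #|Bm| < t by case: Bm12 => ->.
have [/exists_inP[C Ct CD]|all_demanding] :=
  boolP [exists C in large t, C \notin demanding t]; first by exists C.
(* Otherwise [bmap f] would permute the large blocks, which are too big to be
   merged, while the large block [bmap f B1] is also the image of [B1]. *)
have largeP C : C \in large t -> C \in P /\ t <= #|C| by rewrite inE => /andP.
have no_merge C C' : C \in large t -> C' \in large t -> C != C' -> bmap f C != bmap f C'.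
  move=> /largeP[CP tC] /largeP[C'P _] CC'; apply/eqP => /(Bm_max CP C'P CC').
  by apply/negP; rewrite -ltnNge (leq_trans ltBm tC).
have large_img C : C \in large t -> t <= #|f @: C|.
  move=> Ct; have /largeP[CP tC] := Ct.
  have: C \in demanding t by apply: contraR all_demanding => CD; apply/exists_inP; exists C.
  rewrite inE CP /demand; case: eqP => [CB1|//].
  by move: tC; rewrite CB1 leqNgt ltB1.
have bmap_large C : C \in large t -> bmap f C \in large t.
  move=> Ct; have /largeP[CP _] := Ct.
  by rewrite inE bmap_mem (leq_trans (large_img C Ct)) ?card_imset_bmap.
have B1_img : bmap f B1 \in large t.
  by rewrite inE bmap_mem (leq_trans tB1 demand_B1).
have [bmap_inj|[C [C' [Ct C't CC' eCC']]]] := inj_or_collision (bmap f) (large t); last first.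
  by have := no_merge C C' Ct C't CC'; rewrite eCC' eqxx.
have [C Ct /esym eC] := inj_selfmap_onto bmap_large bmap_inj B1_img.
have /largeP[CP tC] := Ct.
have CB1 : C != B1 by apply: contraTneq tC => ->; rewrite -ltnNge.
by have := Bm_max CP B1P CB1 eC; rewrite leqNgt (leq_trans ltBm tC).
Qed.

Lemma demand_threshold t : #|demanding t| <= #|large t|.
Proof.
have sub C : C \in P -> C != B1 -> t <= demand C -> t <= #|C|.
  by move=> _ CB1 /leq_trans; apply; apply: demand_le.
have [small_t|] := boolP ((t <= #|B1|) || ~~ (t <= demand B1)).
  apply: subset_leq_card; apply/subsetP => C; rewrite !inE => /andP[CP tC]; rewrite CP /=.
  have [CB1|CB1] := eqVneq C B1; last exact: sub CP CB1 tC.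
  by move: small_t; rewrite -CB1 tC orbF.
rewrite negb_or negbK -ltnNge => t_mid.
have [C0 C0t C0D] := large_undemanded t_mid.
have sD : demanding t \subset B1 |: (large t :\ C0).
  apply/subsetP => C; rewrite inE => /andP[CP tC].
  have [->|CB1] := eqVneq C B1; first by rewrite setU11.
  rewrite setU1r // !inE CP (sub C CP CB1 tC) !andbT.
  by apply: contraNneq C0D => <-; rewrite inE CP.
apply: leq_trans (subset_leq_card sD) _.
by rewrite cardsU1 (cardsD1 C0 (large t)) C0t add1n; case: (_ \notin _).
Qed.

End Threshold.

Lemma tperm_mem B B' C : B \in P -> B' \in P -> C \in P -> tperm B B' C \in P.
Proof. by move=> BP B'P CP; case: tpermP. Qed.

Lemma card_tperm B B' C : #|B| = #|B'| -> #|tperm B B' C| = #|C|.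
Proof. by move=> eBB'; case: tpermP => [->|->|//]; rewrite eBB'. Qed.

Lemma swap_blocks E E' B0 B0' :
  E \in P -> E' \in P -> B0 \in P -> B0' \in P -> E != E' -> B0 != B0' ->
  #|E| = #|B0| -> #|E'| = #|B0'| ->
  exists rho : {set X} -> {set X}, [/\ {in P, forall C, rho C \in P}, injective rho,
     rho E = B0, rho E' = B0' & forall C, #|rho C| = #|C|].
Proof.
move=> EP E'P B0P B0'P EE' B0B0' cE cE'.
pose E2 := tperm E B0 E'.
have cE2 : #|E2| = #|B0'| by rewrite card_tperm.
exists (fun C => tperm E2 B0' (tperm E B0 C)); split.
- by move=> C CP; rewrite !tperm_mem.
- by move=> C C' /perm_inj/perm_inj.
- rewrite tpermL tpermD 1?eq_sym //.
  by rewrite /E2 -[X in X != _](tpermL E B0) (inj_eq perm_inj).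
- by rewrite tpermL.
- by move=> C; rewrite !card_tperm.
Qed.

Lemma max_merged_pair f M : f \in TXP P -> M \in P -> (forall x, blk (f x) != M) ->
  exists B B', [/\ B \in P, B' \in P, B != B', bmap f B = bmap f B' &
    forall C C', C \in P -> C' \in P -> C != C' -> bmap f C = bmap f C' -> #|C| <= #|B|].
Proof.
move=> fT MP f_misses.
have [bmap_inj|[C [C' [CP C'P CC' eCC']]]] := inj_or_collision (bmap f) P.
  have [C CP eC] := inj_selfmap_onto (fun C _ => bmap_mem f C) bmap_inj MP.
  by have := f_misses (rep C); rewrite eC eqxx.
pose merged (p : {set X} * {set X}) :=
  [&& p.1 \in P, p.2 \in P, p.1 != p.2 & bmap f p.1 == bmap f p.2].
have mC : merged (C, C') by rewrite /merged /= CP C'P CC' eCC' eqxx.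
case: (arg_maxnP (fun p : {set X} * {set X} => #|p.1|) mC).
move=> [B B'] /and4P[BP B'P BB' /eqP eBB'] B_max.
exists B, B'; split=> // D D' DP D'P DD' eDD'.
by apply: (B_max (D, D')); rewrite /merged /= DP D'P DD' eDD' eqxx.
Qed.

Section UpperBound.
Variable W : {set {ffun X -> X}}.
Hypothesis W_push : forall E E', E \in P -> E' \in P -> E != E' -> #|E| <= #|E'| ->
  exists B0 B0', [/\ B0 \in P, B0' \in P, B0 != B0',
    #|B0| = #|E| /\ #|B0'| = #|E'| & push B0 B0' \in W].

Definition reducible f := exists sg w g, [/\ sg \in SigmaXP P, w \in W, g \in TXP P,
  #|hit f| < #|hit g| & f = fcomp (fcomp sg w) g].

Lemma reducible_of_room f (pi : {set X} -> {set X}) (Bs Bt : {set X}) M :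
  f \in TXP P -> {in P, forall C, pi C \in P} -> {in P &, injective pi} ->
  Bs \in P -> Bt \in P -> Bs != Bt -> bmap f Bs = bmap f Bt ->
  (forall C, C \in P -> C != Bs -> C != Bt -> #|f @: C| <= #|pi C|) ->
  #|f @: Bs| <= #|pi Bs| -> #|f @: (Bs :|: Bt)| <= #|pi Bt| -> #|pi Bs| <= #|pi Bt| ->
  M \in P -> (forall x, blk (f x) != M) -> reducible f.
Proof.
move=> fT piP pi_inj BsP BtP Bs_Bt f_merges room room_Bs room_pair le_pi MP f_misses.
have pi_neq : pi Bs != pi Bt by rewrite (inj_in_eq pi_inj).
have [B0 [B0' [B0P B0'P B0B0' [cB0 cB0'] pushW]]] :=
  W_push (piP _ BsP) (piP _ BtP) pi_neq le_pi.
have [rho [rhoP rho_inj rho_Bs rho_Bt rho_card]] :=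
  swap_blocks (piP _ BsP) (piP _ BtP) B0P B0'P pi_neq B0B0' (esym cB0) (esym cB0').
have rho_piP : {in P, forall C, rho (pi C) \in P} by move=> C /piP/rhoP.
have rho_pi_inj : {in P &, injective (rho \o pi)} by move=> C C' CP C'P /rho_inj/pi_inj->.
have [|||sg [g [sgS gT hit_g ef]]] := factor_through_push fT rho_piP rho_pi_inj
  BsP BtP Bs_Bt f_merges rho_Bs rho_Bt _ _ _ MP f_misses.
- by move=> C CP CBs CBt; rewrite rho_card room.
- by rewrite cB0.
- by rewrite cB0'.
by exists sg, (push B0 B0'), g.
Qed.

Lemma reducible_of_merge f (B1 B2 Bm : {set X}) M :
  f \in TXP P -> B1 \in P -> B2 \in P -> B1 != B2 ->
  bmap f B1 = bmap f B2 -> #|f @: B2| <= #|f @: B1| ->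
  (forall C C', C \in P -> C' \in P -> C != C' -> bmap f C = bmap f C' -> #|C| <= #|Bm|) ->
  Bm = B1 \/ Bm = B2 -> M \in P -> (forall x, blk (f x) != M) -> reducible f.
Proof.
move=> fT B1P B2P B1_B2 f_merges img_le Bm_max Bm12 MP f_misses.
have [pi [pi_inj pi_dom]] := threshold_injection
  (demand_threshold fT B1P B2P B1_B2 f_merges img_le Bm_max Bm12).
have piP : {in P, forall C, pi C \in P} by move=> C /pi_dom[].
have room C : C \in P -> C != B1 -> #|f @: C| <= #|pi C|.
  by move=> CP CB1; have [_] := pi_dom C CP; rewrite /demand (negbTE CB1).
have room_pair : #|f @: (B1 :|: B2)| <= #|pi B1|.
  by have [_] := pi_dom B1 B1P; rewrite /demand eqxx.
have [le21|lt12] := leqP #|pi B2| #|pi B1|.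
  apply: (@reducible_of_room f pi B2 B1 M) => //.
  - by rewrite eq_sym.
  - by move=> C CP _; apply: room.
  - by rewrite room // eq_sym.
  - by rewrite setUC.
apply: (@reducible_of_room f pi B1 B2 M) => //.
- by move=> C CP CB1 _; apply: room.
- by apply: leq_trans room_pair; apply/subset_leq_card/imsetS/subsetUl.
- exact: leq_trans room_pair (ltnW lt12).
- exact: ltnW.
Qed.

Lemma reducible_of_miss f M :
  f \in TXP P -> M \in P -> (forall x, blk (f x) != M) -> reducible f.
Proof.
move=> fT MP f_misses.
have [B [B' [BP B'P BB' eBB' B_max]]] := max_merged_pair fT MP f_misses.
have [le|lt] := leqP #|f @: B'| #|f @: B|.
  by apply: (@reducible_of_merge f B B' B M) => //; left.
apply: (@reducible_of_merge f B' B B M) => //; first by rewrite eq_sym.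
- exact: ltnW.
- by right.
Qed.

Lemma TXP_in_sgp_gen f : f \in TXP P -> in_sgp_gen (SigmaXP P :|: W) f.
Proof.
move=> fT; have [n] := ubnP (#|P| - #|hit f|); elim: n f fT => // n IH f fT missing.
have [f_onto|] := eqVneq (hit f) P.
  apply/in_sgp_gen1/setUP; left; apply/SigmaXP_P; split=> // B.
  by rewrite -f_onto => /imsetP[x _ ->]; exists x; apply: mem_blk.
rewrite eqEsubset hit_sub /= => /subsetPn[M MP Mf].
have f_misses x : blk (f x) != M by apply: contraNneq Mf => <-; apply: imset_f.
have [sg [w [g [sgS wW gT hit_g ->]]]] := reducible_of_miss fT MP f_misses.
apply: in_sgp_gen_comp; first by apply: in_sgp_gen_comp; apply/in_sgp_gen1/setUP; [left|right].
have hit_f_lt : #|hit f| < #|P| := leq_trans hit_g (subset_leq_card (hit_sub g)).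
by apply: IH gT _; rewrite ltnS in missing; apply: leq_trans missing; apply: ltn_sub2l.
Qed.

End UpperBound.

(** * Single merges *)

(* Sizes are coded in ['I_#|X|.+1] so that pairs of sizes form a finite type. *)
Definition size_ord C : 'I_#|X|.+1 := inord #|C|.

Lemma size_ordK C : size_ord C = #|C| :> nat.
Proof. by rewrite inordK // ltnS max_card. Qed.

Lemma size_ord_eq B C : (size_ord B == size_ord C) = (#|B| == #|C|).
Proof. by rewrite -val_eqE /= !size_ordK. Qed.

(* No element of Sigma is a single merge, and a product is a single merge of
   type [A] only if one of its factors is, so every type [A] needs its own
   generator. *)
Definition single_merge (A : {set 'I_#|X|.+1}) f : Prop :=
  [/\ f \in TXP P, forall C, C \in P -> {in C &, injective f} &
   exists B B', [/\ B \in P, B' \in P, B != B', A = [set size_ord B; size_ord B'] &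
     bmap f B = bmap f B' /\ forall C C', C \in P -> C' \in P -> C != C' ->
       bmap f C = bmap f C' -> (C = B /\ C' = B') \/ (C = B' /\ C' = B)]].

Lemma single_merge_uniq A A' f : single_merge A f -> single_merge A' f -> A = A'.
Proof.
move=> [_ _ [B [B' [_ _ _ -> [_ merge_uniq]]]]] [_ _ [C [C' [CP C'P CC' -> [eCC' _]]]]].
by case: (merge_uniq C C' CP C'P CC' eCC') => [[-> ->]|[-> ->]]; rewrite // setUC.
Qed.

Lemma single_merge_notin_Sigma A f : single_merge A f -> f \notin SigmaXP P.
Proof.
move=> [fT _ [B [B' [BP B'P BB' _ [eBB' _]]]]]; apply/negP => /SigmaXP_P[_ f_onto].
have bmap_onto : P \subset bmap f @: P.
  apply/subsetP => C CP; have [x fxC] := f_onto C CP.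
  by apply/imsetP; exists (blk x); rewrite ?blk_mem // bmap_blk // (blk_eq CP fxC).
have /imset_injP bmap_inj : #|bmap f @: P| == #|P|.
  by rewrite eqn_leq leq_imset_card subset_leq_card.
by move/negP: BB'; apply; apply/eqP/bmap_inj.
Qed.

Lemma single_merge_push B0 B0' : B0 \in P -> B0' \in P -> B0 != B0' -> #|B0| <= #|B0'| ->
  single_merge [set size_ord B0; size_ord B0'] (push B0 B0').
Proof.
move=> B0P B0'P B0B0' le_B0.
have blk_push y : blk (push B0 B0' y) = if y \in B0 then B0' else blk y.
  case: ifP => yB0; first exact: blk_eq B0'P (push_in le_B0 yB0).
  by rewrite push_out ?yB0.
have bmap_push C : C \in P -> bmap (push B0 B0') C = if C == B0 then B0' else C.
  by move=> CP; rewrite /bmap blk_push (mem_blockE _ B0P) blk_rep.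
split.
- apply/TXP_blkP => x y xy; rewrite !blk_push (mem_blockE x B0P) (mem_blockE y B0P) xy.
  by case: ifP.
- move=> C CP x y xC yC; have [CB0|CB0] := eqVneq C B0.
    by apply: push_inj; rewrite // -CB0.
  have out z : z \in C -> z \notin B0 by move=> zC; rewrite (mem_blockE _ B0P) (blk_eq CP zC).
  by rewrite !push_out ?out.
exists B0, B0'; split=> //; split.
  by rewrite !bmap_push // eqxx eq_sym (negbTE B0B0').
move=> C C' CP C'P CC'; rewrite !bmap_push //.
have [CB0|CB0] := eqVneq C B0; have [C'B0|C'B0] := eqVneq C' B0 => e.
- by rewrite CB0 C'B0 eqxx in CC'.
- by left; rewrite CB0 e.
- by right; rewrite C'B0 e.
- by rewrite e eqxx in CC'.
Qed.

Section CompositeMerge.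
Variables (A : {set 'I_#|X|.+1}) (g h : {ffun X -> X}).
Hypotheses (gT : g \in TXP P) (hT : h \in TXP P) (gh_merge : single_merge A (fcomp g h)).

Lemma blockwise_inj_left C : C \in P -> {in C &, injective g}.
Proof.
case: gh_merge => _ gh_inj _ CP x y xC yC e.
by apply: (gh_inj C) => //; rewrite !fcompE e.
Qed.

Section InjectiveOnBlocks.
Hypothesis bmap_g_inj : {in P &, injective (bmap g)}.

Lemma inj_of_bmap_inj : injective g.
Proof.
move=> x y e; have xy : blk x = blk y.
  by apply: bmap_g_inj; rewrite ?blk_mem // !bmap_blk // e.
apply: (blockwise_inj_left (blk_mem x)) e; first exact: mem_blk.
by rewrite xy mem_blk.
Qed.

Let g_bij := injF_bij inj_of_bmap_inj.

Lemma bmap_imset C : C \in P -> bmap g C = g @: C.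
Proof.
move=> CP; have [g' _ g'K] := g_bij.
apply/eqP; rewrite eqEsubset imset_sub_bmap // andbT; apply/subsetP => y yC.
rewrite -(g'K y) imset_f // mem_blockE //; apply/eqP/bmap_g_inj; rewrite ?blk_mem //.
by rewrite bmap_blk // g'K (blk_eq (bmap_mem g C) yC).
Qed.

Lemma single_merge_right : single_merge A h.
Proof.
case: gh_merge => _ gh_inj [B [B' [BP B'P BB' eA [e_merge merge_uniq]]]].
have [g' _ g'K] := g_bij.
have blk_g' y : bmap g (blk (g' y)) = blk y by rewrite bmap_blk // g'K.
have card_bmap C : C \in P -> #|bmap g C| = #|C|.
  by move=> CP; rewrite bmap_imset // card_imset //; apply: inj_of_bmap_inj.
split=> //.
  move=> E EP y y' yE y'E; rewrite -(g'K y) -(g'K y') => e; congr (g _).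
  have yy' : blk (g' y) = blk (g' y').
    by apply: bmap_g_inj; rewrite ?blk_mem // !blk_g' (blk_eq EP yE) (blk_eq EP y'E).
  by apply: (gh_inj (blk (g' y))); rewrite ?blk_mem ?mem_blk ?yy' ?mem_blk // !fcompE.
exists (bmap g B), (bmap g B'); split; rewrite ?bmap_mem ?(inj_in_eq bmap_g_inj) //.
  by rewrite eA /size_ord !card_bmap.
split; first by rewrite -!bmap_comp.
move=> D D' DP D'P DD' eD.
have [C CP eC] := inj_selfmap_onto (fun C _ => bmap_mem g C) bmap_g_inj DP.
have [C' C'P eC'] := inj_selfmap_onto (fun C _ => bmap_mem g C) bmap_g_inj D'P.
have CC' : C != C' by apply: contraNneq DD' => CC'; rewrite eC eC' CC'.
rewrite eC eC' -!bmap_comp // in eD.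
by rewrite eC eC'; case: (merge_uniq C C' CP C'P CC' eD) => -[-> ->]; [left|right].
Qed.

End InjectiveOnBlocks.

Lemma single_merge_comp : single_merge A g \/ single_merge A h.
Proof.
have [bmap_inj|[C [C' [CP C'P CC' eCC']]]] := inj_or_collision (bmap g) P.
  by right; apply: single_merge_right.
left; case: gh_merge => _ _ [B [B' [BP B'P BB' eA [_ merge_uniq]]]].
have gh_CC' : bmap (fcomp g h) C = bmap (fcomp g h) C' by rewrite !bmap_comp // eCC'.
split=> //; first exact: blockwise_inj_left.
exists B, B'; split=> //; split.
  by case: (merge_uniq C C' CP C'P CC' gh_CC') => -[<- <-].
by move=> D D' DP D'P DD' eD; apply: merge_uniq; rewrite // !bmap_comp // eD.
Qed.

End CompositeMerge.

Lemma single_merge_seq_comp A W s : W \subset TXP P ->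
  s != [::] -> all (fun g => g \in SigmaXP P :|: W) s ->
  single_merge A (seq_comp s) -> exists2 w, w \in W & single_merge A w.
Proof.
move=> WT; elim: s => // g s IH _ /andP[gW sW].
have inT w : w \in SigmaXP P :|: W -> w \in TXP P.
  by case/setUP => [/SigmaXP_TXP|/(subsetP WT)].
have in_W w : w \in SigmaXP P :|: W -> single_merge A w ->
    exists2 w, w \in W & single_merge A w.
  case/setUP => [wS /single_merge_notin_Sigma|wW wA]; [by rewrite wS | by exists w].
case: s IH sW => [|g' s] IH sW; first by rewrite seq_comp1; apply: in_W.
have sT : seq_comp (g' :: s) \in TXP P.
  have sW' : all (fun g => g \in SigmaXP P :|: W) (g' :: s) := sW.
  by apply: seq_comp_TXP; apply/allP => z /(allP sW')/inT.
rewrite seq_comp_cons => /(single_merge_comp (inT g gW) sT)[/(in_W g gW)//|].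
exact: IH.
Qed.

(** * Counting the types *)

Definition merge_sizes : {set {set 'I_#|X|.+1}} := [set A | [exists B in P, exists B' in P,
  (B != B') && (A == [set size_ord B; size_ord B'])]].

Lemma merge_sizesP A : reflect (exists B B', [/\ B \in P, B' \in P, B != B' &
  A = [set size_ord B; size_ord B']]) (A \in merge_sizes).
Proof.
rewrite inE; apply: (iffP exists_inP) => [[B BP /exists_inP[B' B'P /andP[BB' /eqP eA]]]|].
  by exists B, B'.
case=> B [B' [BP B'P BB' eA]]; exists B => //; apply/exists_inP; exists B' => //.
by apply/andP; split=> //; apply/eqP.
Qed.

Lemma mem_block_sizes m : (m \in block_sizes P) = [exists B in P, #|B| == m].
Proof.
rewrite mem_undup; apply/mapP/exists_inP => [[B BP ->]|[B BP /eqP <-]].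
  by exists B; rewrite // -mem_enum.
by exists B; rewrite // mem_enum.
Qed.

Let sizes := [set z : 'I_#|X|.+1 | nat_of_ord z \in block_sizes P].
Let repeated := [set z : 'I_#|X|.+1 | nat_of_ord z \in
  [seq m <- block_sizes P | 1 < #|[set B in P | #|B| == m]|]].

Lemma block_sizes_lt : all (fun m => m < #|X|.+1) (block_sizes P).
Proof.
by apply/allP => m; rewrite mem_block_sizes => /exists_inP[B _ /eqP <-]; rewrite ltnS max_card.
Qed.

Lemma mem_sizes z : reflect (exists2 B, B \in P & size_ord B = z) (z \in sizes).
Proof.
rewrite inE mem_block_sizes; apply: (iffP exists_inP) => [[B BP /eqP e]|[B BP <-]].
  by exists B => //; apply: ord_inj; rewrite size_ordK.
by exists B; rewrite // size_ordK.
Qed.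

Lemma merge_sizes_split :
  merge_sizes =
    [set A : {set _} | A \subset sizes & #|A| == 2] :|: [set [set z] | z in repeated].
Proof.
apply/setP => A; rewrite in_setU; apply/merge_sizesP/idP => [[B [B' [BP B'P BB' ->]]]|].
  have [eBB'|nBB'] := eqVneq (size_ord B) (size_ord B'); apply/orP; [right|left].
    apply/imsetP; exists (size_ord B); last by rewrite -eBB' setUid.
    rewrite inE mem_filter size_ordK mem_block_sizes andbC.
    apply/andP; split; first by apply/exists_inP; exists B.
    apply/card_gt1P; exists B, B'; rewrite !inE BP B'P BB' eqxx -size_ord_eq -eBB' eqxx.
    by [].
  rewrite inE cards2 nBB' andbT; apply/subsetP => z /set2P[]->; apply/mem_sizes.
    by exists B.
  by exists B'.
case/orP => [|/imsetP[z]]; first rewrite inE => /andP[sizesA /cards2P[a [b [ab eA]]]].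
  have /mem_sizes[B BP eB] : a \in sizes by apply: (subsetP sizesA); rewrite eA set21.
  have /mem_sizes[B' B'P eB'] : b \in sizes by apply: (subsetP sizesA); rewrite eA set22.
  exists B, B'; split; rewrite ?eA ?eB ?eB' //.
  by apply: contraNneq ab => BB'; rewrite -eB -eB' BB'.
rewrite inE mem_filter => /andP[/card_gt1P[B [B' [+ + BB']]] _] ->.
rewrite !inE => /andP[BP /eqP eB] /andP[B'P /eqP eB'].
have sB : size_ord B = z by apply: ord_inj; rewrite size_ordK.
have sB' : size_ord B' = z by apply: ord_inj; rewrite size_ordK.
by exists B, B'; rewrite sB sB' setUid.
Qed.

Lemma card_merge_sizes :
  #|merge_sizes| = 'C(size (block_sizes P), 2) + repeated_sizes P.
Proof.
rewrite merge_sizes_split cardsU.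
have -> :
    #|[set A : {set _} | A \subset sizes & #|A| == 2] :&: [set [set z] | z in repeated]| = 0.
  apply: eq_card0 => A; rewrite !inE; apply/negP => /andP[/andP[_ cA] /imsetP[z _ eA]].
  by rewrite eA cards1 in cA.
rewrite subn0 cards_draws card_ord_mem_seq ?undup_uniq ?block_sizes_lt //.
rewrite card_in_imset; last by move=> a b _ _; apply: set1_inj.
rewrite card_ord_mem_seq ?filter_uniq ?undup_uniq //.
by apply/allP => m; rewrite mem_filter => /andP[_]; apply: (allP block_sizes_lt).
Qed.

Definition push_pair (A : {set 'I_#|X|.+1}) : {ffun X -> X} :=
  if [pick p : {set X} * {set X} | [&& p.1 \in P, p.2 \in P, p.1 != p.2,
        #|p.1| <= #|p.2| & A == [set size_ord p.1; size_ord p.2]]] is Some p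
  then push p.1 p.2 else [ffun x => x].

Lemma push_pairP A : A \in merge_sizes -> exists B0 B0', [/\ B0 \in P, B0' \in P, B0 != B0',
  #|B0| <= #|B0'| /\ A = [set size_ord B0; size_ord B0'] & push_pair A = push B0 B0'].
Proof.
case/merge_sizesP => B [B' [BP B'P BB' eA]]; rewrite /push_pair.
case: pickP => [[C C'] /and5P[CP C'P CC' le /eqP eC]|none]; first by exists C, C'.
have [le|lt] := leqP #|B| #|B'|.
  by have := none (B, B'); rewrite /= BP B'P BB' le eA eqxx.
by have := none (B', B); rewrite /= BP B'P eq_sym BB' (ltnW lt) eA setUC eqxx.
Qed.

Lemma push_pair_TXP A : push_pair A \in TXP P.
Proof.
rewrite /push_pair; case: pickP => [[C C'] /and5P[CP C'P CC' le _]|_]; last exact: id_TXP.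
by case: (single_merge_push CP C'P CC' le).
Qed.

Lemma push_pairs_TXP : push_pair @: merge_sizes \subset TXP P.
Proof. by apply/subsetP => _ /imsetP[A _ ->]; apply: push_pair_TXP. Qed.

Lemma push_pairs_cover E E' : E \in P -> E' \in P -> E != E' -> #|E| <= #|E'| ->
  exists B0 B0', [/\ B0 \in P, B0' \in P, B0 != B0',
    #|B0| = #|E| /\ #|B0'| = #|E'| & push B0 B0' \in push_pair @: merge_sizes].
Proof.
move=> EP E'P EE' le_E.
have EE'_sizes : [set size_ord E; size_ord E'] \in merge_sizes.
  by apply/merge_sizesP; exists E, E'.
have [B0 [B0' [B0P B0'P B0B0' [le_B0 eA] e_push]]] := push_pairP EE'_sizes.
have sB0 : size_ord B0 <= size_ord B0' by rewrite !size_ordK.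
have sE : size_ord E <= size_ord E' by rewrite !size_ordK.
have [eB0 eB0'] := set2_sorted_inj sB0 sE (esym eA).
exists B0, B0'; split=> //; first by split; apply/eqP; rewrite -size_ord_eq ?eB0 ?eB0'.
by rewrite -e_push imset_f.
Qed.

Lemma merge_sizes_le_generators W : W \subset TXP P ->
  generates_with (TXP P) (SigmaXP P) W -> #|merge_sizes| <= #|W|.
Proof.
move=> WT W_gen; apply: (@card_le_of_witnesses _ _ _ _ single_merge); last first.
  by move=> A A' w; apply: single_merge_uniq.
move=> A /push_pairP[B0 [B0' [B0P B0'P B0B0' [le_B0 ->] e_push]]].
have [s [s_nil sW e_s]] := (W_gen _).1 (push_pair_TXP [set size_ord B0; size_ord B0']).
apply: (single_merge_seq_comp WT s_nil sW); rewrite -e_s e_push.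
exact: single_merge_push.
Qed.

Lemma relative_rank_merge_sizes :
  relative_rank_eq (TXP P) (SigmaXP P) #|merge_sizes|.
Proof.
have gens : generates_with (TXP P) (SigmaXP P) (push_pair @: merge_sizes).
  move=> f; split; first exact: TXP_in_sgp_gen push_pairs_cover f.
  exact: in_sgp_gen_TXP push_pairs_TXP.
split; last exact: merge_sizes_le_generators.
exists (push_pair @: merge_sizes); split=> //; first exact: push_pairs_TXP.
apply/eqP; rewrite eqn_leq leq_imset_card /=.
exact: merge_sizes_le_generators push_pairs_TXP gens.
Qed.

End Partition.

Theorem theorem3p3 (X : finType) (P : {set {set X}}) :
  0 < #|X| -> partition P [set: X] ->
  relative_rank_eq (TXP P) (SigmaXP P)
    ('C(size (block_sizes P), 2) + repeated_sizes P).
Proof.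
move=> /card_gt0P[x0 _] partP.
by rewrite -card_merge_sizes; apply: relative_rank_merge_sizes.
Qed.
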